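(* Let $X_1,X_2,\ldots$ be i.i.d. with density $g(x;\Psi_0,\sigma_0)$, where $\Psi_0\in\boldsymbol{\Psi}_m$, $\sigma_0>0$, and assume $f(\cdot;0,1)$ satisfies Conditions C3 and C4. Let $a=(1+\beta)/(2\beta)$, $b=2(\beta+1)/(\beta-1)$ and $\epsilon_0=(3mbv_0/\sigma_0)^{-1/(1-a)}$. Then, with probability one, there exists $n_0$ such that for all $n\ge n_0$, $$\sup_{\mu\in\mathbb{R}}\sum_{i=1}^n I\big(|X_i-\mu|<\epsilon_0^{1-a}\big)\le \frac{n}{mb}.$$
   Context: Fix a positive integer $m$. Let $f(x;0,1)$ be a probability density on $\mathbb{R}$, $f(x;\mu,\sigma)=\sigma^{-1}f((x-\mu)/\sigma;0,1)$, $\boldsymbol{\Psi}_m=\{\sum_{j=1}^m\alpha_j I(\mu_j\le\mu):\alpha_j\ge0,\sum_j\alpha_j=1,\mu_j\in\mathbb{R}\}$, and $g(x;\Psi,\sigma)=\sum_{j=1}^m\alpha_j f(x;\mu_j,\sigma)$. (C3) There exist $v_0,v_1>0$ and $\beta>1$ such that $f(x;0,1)\le\min\{v_0,v_1|x|^{-\beta}\}$ for all $x$. (C4) $f(x;0,1)$ is continuous in $x$. The constants $v_0,\beta$ in the claim are those of C3; note $0<a<1$. *)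

From HB Require Import structures.
From mathcomp Require Import all_boot all_order all_algebra.
From mathcomp Require Import all_classical all_reals all_analysis.
Set Implicit Arguments. Unset Strict Implicit. Unset Printing Implicit Defensive.
Import Order.TTheory GRing.Theory Num.Theory.
Import numFieldNormedType.Exports.
Local Open Scope classical_set_scope.
Local Open Scope ring_scope.

Definition locscale {R : realType} (f : R -> R) (mu sigma x : R) : R :=
  sigma^-1 * f ((x - mu) / sigma).

(* finite location mixture g(x; Psi, sigma) = sum_j alpha_j f(x; mu_j, sigma),
   Psi = sum_j alpha_j I(mu_j <= .) given by weights alpha and atoms mu *)
Definition mixture_density {R : realType} (m : nat) (f : R -> R)
  (alpha mu : 'I_m -> R) (sigma x : R) : R :=
  \sum_(j < m) alpha j * locscale f (mu j) sigma x.

Definition in_Psi_m {R : realType} (m : nat) (alpha : 'I_m -> R) : Prop :=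
  (forall j, 0 <= alpha j) /\ \sum_(j < m) alpha j = 1.

Definition is_density {R : realType} (f : R -> R) : Prop :=
  measurable_fun [set: R] f /\ (forall x, 0 <= f x) /\
  (\int[@lebesgue_measure R]_x (f x)%:E = 1)%E.

(* Condition C3 with explicit constants v0, v1, beta:
   f x <= min{v0, v1 |x|^-beta}.  At x = 0, |x|^-beta = +oo, so the bound is v0;
   we split the min to avoid MathComp's convention 0 `^ (-beta) = 0. *)
Definition condC3 {R : realType} (f : R -> R) (v0 v1 beta : R) : Prop :=
  0 < v0 /\ 0 < v1 /\ 1 < beta /\
  forall x, f x <= v0 /\ (x != 0 -> f x <= v1 * `|x| `^ (- beta)).

Definition condC4 {R : realType} (f : R -> R) : Prop := continuous f.

Definition has_density {d} {T : measurableType d} {R : realType}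
  (P : probability T R) (X : T -> R) (g : R -> R) : Prop :=
  forall A : set R, measurable A ->
    (P (X @^-1` A) = \int[@lebesgue_measure R]_(x in A) (g x)%:E)%E.

Definition mutually_independent {d} {T : measurableType d} {R : realType}
  (P : probability T R) (X : nat -> T -> R) : Prop :=
  forall (s : seq nat) (A : nat -> set R),
    uniq s -> (forall i, measurable (A i)) ->
    P (\bigcap_(i in [set` s]) (X i @^-1` A i)) =
    (\prod_(i <- s) P (X i @^-1` A i))%E.

From HB Require Import structures.
From mathcomp Require Import all_boot all_order all_algebra.
From mathcomp Require Import all_classical all_reals all_analysis.
From mathcomp Require Import ring lra.
Import Order.TTheory GRing.Theory Num.Theory.
Import numFieldNormedType.Exports.
Local Open Scope classical_set_scope.
Local Open Scope ring_scope.
Set Implicit Arguments. Unset Strict Implicit.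

(* Let c = 1/(m b) and r = eps0^(1-a) = sigma0/(3 m b v0).  Since g <= v0/sigma0,
   a window |x - mu| < r has probability at most 2 r v0/sigma0 = 2c/3 < c, and so has a
   slightly enlarged window.  Windows far out lie in a tail set {|x| > M} of probability
   < c, and the remaining ones lie in finitely many enlarged windows centred on a grid.
   For each of these finitely many Borel sets A with P(X_i in A) = p < c, a Chernoff bound
   gives P(#{i < n | X_i in A} > c n) <= rho^n with rho < 1, so by Borel-Cantelli the
   count is eventually at most c n almost surely; intersecting the finitely many
   almost-sure events bounds every window at once. *)

Section Chernoff.
Variable R : realType.

Definition count_true n (pt : {ffun 'I_n -> bool}) : R := \sum_(j < n) (pt j)%:R.

Definition bernoulli_weight (p : R) n (pt : {ffun 'I_n -> bool}) : R :=
  \prod_(i < n) (if pt i then p else 1 - p).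

Lemma bernoulli_weight_ge0 (p : R) n (pt : {ffun 'I_n -> bool}) :
  0 <= p <= 1 -> 0 <= bernoulli_weight p pt.
Proof. by move=> /andP[p0 p1]; apply: prodr_ge0 => i _; case: (pt i); lra. Qed.

Lemma bernoulli_mgf_le (p s : R) : 0 <= p -> 0 <= s ->
  1 - p + p * expR s <= expR (p * (expR s - 1)).
Proof. by move=> p0 s0; apply: le_trans (expR_ge1Dx _); lra. Qed.

(* Exponential Markov inequality: each pattern counted on the left satisfies
   [1 <= expR (s * (count_true pt - c * n))], and the tilted weights sum to a power
   by distributivity. *)
Lemma binomial_tail_chernoff n (p c s : R) : 0 <= p <= 1 -> 0 <= s ->
  \sum_(pt : {ffun 'I_n -> bool} | c * n%:R < count_true pt) bernoulli_weight p pt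
  <= expR (p * (expR s - 1) - s * c) ^+ n.
Proof.
move=> /andP[p0 p1] s0.
have es0 : 0 <= p * expR s by rewrite mulr_ge0 ?expR_ge0.
pose tilted (pt : {ffun 'I_n -> bool}) :=
  \prod_(i < n) (if pt i then p * expR s else 1 - p).
have tiltedE pt : tilted pt = expR (s * count_true pt) * bernoulli_weight p pt.
  rewrite /tilted /count_true mulr_sumr (big_morph _ (@expRD R) (expR0 R)).
  rewrite -big_split /=; apply: eq_bigr => i _.
  by case: (pt i); rewrite ?mulr1 ?mulr0 ?expR0 ?mul1r // mulrC.
have tilted_sum : \sum_pt tilted pt = (1 - p + p * expR s) ^+ n.
  rewrite -(bigA_distr_bigA (fun (i : 'I_n) (b : bool) => if b then p * expR s else 1 - p)).
  by rewrite prodr_const card_ord big_bool /= addrC.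
apply: (@le_trans _ _ (expR (- (s * c * n%:R)) * \sum_pt tilted pt)); last first.
  have -> : expR (p * (expR s - 1) - s * c) ^+ n =
      expR (- (s * c * n%:R)) * expR (p * (expR s - 1)) ^+ n.
    by rewrite -!expRM_natr -expRD mulrBl addrC.
  rewrite tilted_sum ler_wpM2l ?expR_ge0 // lerXn2r ?nnegrE ?bernoulli_mgf_le //.
  by lra.
rewrite big_distrr [X in _ <= X](bigID (fun pt => c * n%:R < count_true pt)) /=.
rewrite -[X in X <= _]addr0; apply: lerD; last first.
  apply: sumr_ge0 => pt _; rewrite mulr_ge0 ?expR_ge0 //.
  by apply: prodr_ge0 => i _; case: (pt i); lra.
apply: ler_sum => pt hpt; rewrite tiltedE mulrA -expRD -[X in X <= _]mul1r.
apply: ler_wpM2r; first by rewrite bernoulli_weight_ge0 ?p0.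
by apply: le_trans (expR_ge1Dx _); rewrite lerDl; move: hpt; nra.
Qed.

Lemma chernoff_rate_lt1 (p c : R) : 0 <= p -> p < c ->
  exists2 s, 0 <= s & expR (p * (expR s - 1) - s * c) < 1.
Proof.
move=> p0 pc; have c0 : 0 < c by lra.
pose s := (c - p) / (2 * c).
have s0 : 0 < s by apply: divr_gt0; lra.
have s2c : s * (2 * c) = c - p by rewrite /s mulfVK // gt_eqF // mulr_gt0.
have es0 : 0 < expR s by exact: expR_gt0.
have es_le : expR s * (1 - s) <= 1.
  have : 1 - s <= (expR s)^-1 by rewrite -expRN; apply: le_trans (expR_ge1Dx _); lra.
  by move/(ler_wpM2l (ltW es0)); rewrite mulfV ?gt_eqF.
exists s; first exact: ltW.
rewrite expR_lt1 -(@ltr_pM2r _ (1 - s)); last by nra.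
by rewrite mul0r; nra.
Qed.

End Chernoff.

Lemma geometric_eseries_lt_pinfty (R : realType) (r : R) : 0 <= r < 1 ->
  (\sum_(0 <= k <oo) (r ^+ k)%:E < +oo)%E.
Proof.
move=> /andP[r0 r1].
have cvg_r : cvgn (series (geometric 1 r)).
  by apply: is_cvg_geometric_series; rewrite ger0_norm.
have -> : (fun n => \sum_(0 <= k < n) (r ^+ k)%:E)%E = EFin \o series (geometric 1 r).
  apply/funext => n /=; rewrite sumEFin /series /=; congr (_%:E).
  by apply: eq_bigr => k _; rewrite /geometric mul1r.
by rewrite EFin_lim // ltry.
Qed.

Section BorelCantelli.
Context d (T : measurableType d) (R : realType) (mu : {measure set T -> \bar R}).

Lemma le_measure_bigsetU (I : Type) (F : I -> set T) (s : seq I) (Q : pred I) :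
  (forall i, measurable (F i)) ->
  (mu (\big[setU/set0]_(i <- s | Q i) F i) <= \sum_(i <- s | Q i) mu (F i))%E.
Proof.
move=> mF; elim: s => [|i s IH]; first by rewrite !big_nil measure0.
rewrite !big_cons; case: (Q i) => //.
apply: le_trans (measureU2 _ _ _) _ => //; first exact: bigsetU_measurable.
exact: leeD2l.
Qed.

Lemma ae_eventually_notin_of_summable (F : (set T)^nat) :
  (forall n, measurable (F n)) -> (\sum_(n <oo) mu (F n) < +oo)%E ->
  {ae mu, forall w, \forall n \near \oo, ~ F n w}.
Proof.
move=> mF Foo; exists (lim_sup_set F); split.
- by apply: bigcap_measurable => // k _; exact: bigcup_measurable.
- exact: lim_sup_set_cvg0.
move=> w /= notev k _; apply: contrapT => notFk; apply: notev.
by exists k => // j /= kj Fj; apply: notFk; exists j.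
Qed.

End BorelCantelli.

Section PatternEvents.
Context d (T : measurableType d) (R : realType) (P : probability T R).
Variables (X : nat -> {mfun T >-> R}) (A : set R).
Hypothesis mA : measurable A.

(* [nth false (fgraph pt)] extends the pattern [pt] to all of [nat], as independence
   is stated for families indexed by [nat]. *)
Definition pattern_set n (pt : {ffun 'I_n -> bool}) (i : nat) : set R :=
  if nth false (fgraph pt) i then A else ~` A.

Definition pattern_event n (pt : {ffun 'I_n -> bool}) : set T :=
  \bigcap_(i in [set` iota 0 n]) (X i @^-1` pattern_set pt i).

Definition excess_event (c : R) n : set T :=
  \big[setU/set0]_(pt : {ffun 'I_n -> bool} | c * n%:R < count_true R pt)
    pattern_event pt.

Lemma measurable_pattern_set n (pt : {ffun 'I_n -> bool}) i :
  measurable (pattern_set pt i).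
Proof. by rewrite /pattern_set; case: ifP => _ //; exact: measurableC. Qed.

Lemma measurable_pattern_event n (pt : {ffun 'I_n -> bool}) :
  measurable (pattern_event pt).
Proof.
apply: bigcap_measurableType => i _.
by apply: measurable_funPTI; exact: measurable_pattern_set.
Qed.

Lemma measurable_excess_event c n : measurable (excess_event c n).
Proof. by apply: bigsetU_measurable => pt _; exact: measurable_pattern_event. Qed.

Lemma pattern_event_prob (p : R) n (pt : {ffun 'I_n -> bool}) :
  mutually_independent P (fun i => X i : T -> R) ->
  (forall i, P (X i @^-1` A) = p%:E) ->
  P (pattern_event pt) = (bernoulli_weight p pt)%:E.
Proof.
move=> indep XA.
rewrite /pattern_event indep ?iota_uniq //; last exact: measurable_pattern_set.
have -> : iota 0 n = index_iota 0 n by rewrite /index_iota subn0.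
rewrite -prodEFin big_mkord.
apply: eq_bigr => i _; rewrite /pattern_set nth_fgraph_ord.
case: (pt i); first exact: XA.
by rewrite preimage_setC probability_setC ?XA //; exact: measurable_funPTI.
Qed.

Lemma excess_eventW c n w :
  c * n%:R < \sum_(i < n) (X i w \in A)%:R -> excess_event c n w.
Proof.
move=> excess; pose ptw := [ffun j : 'I_n => X j w \in A].
rewrite /excess_event (bigD1 ptw) /=; last first.
  by rewrite /count_true; under eq_bigr do rewrite ffunE.
left => i; rewrite /= mem_iota add0n => /andP[_ ltin].
rewrite /pattern_set -[i]/(nat_of_ord (Ordinal ltin)) nth_fgraph_ord ffunE.
by case: ifP => [/set_mem|/negbT/negP XnA] // /mem_set.
Qed.

Lemma excess_event_prob_le (p c s : R) n :
  mutually_independent P (fun i => X i : T -> R) ->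
  (forall i, P (X i @^-1` A) = p%:E) -> 0 <= p <= 1 -> 0 <= s ->
  (P (excess_event c n) <= (expR (p * (expR s - 1) - s * c) ^+ n)%:E)%E.
Proof.
move=> indep XA p01 s0.
apply: le_trans (le_measure_bigsetU _ _ _ _) _; first exact: measurable_pattern_event.
rewrite (eq_bigr (fun pt => (bernoulli_weight p pt)%:E)); last first.
  by move=> pt _; exact: pattern_event_prob.
by rewrite sumEFin lee_fin binomial_tail_chernoff.
Qed.

End PatternEvents.

Lemma ae_eventually_freq_le d (T : measurableType d) (R : realType)
    (P : probability T R) (X : nat -> {mfun T >-> R}) (A : set R) (c : R) :
  measurable A -> mutually_independent P (fun i => X i : T -> R) ->
  (forall i, P (X i @^-1` A) = P (X 0%N @^-1` A)) -> (P (X 0%N @^-1` A) < c%:E)%E ->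
  {ae P, forall w, \forall n \near \oo, \sum_(i < n) (X i w \in A)%:R <= c * n%:R}.
Proof.
move=> mA indep.
have mXA : measurable (X 0%N @^-1` A) by exact: measurable_funPTI.
set p := fine (P (X 0%N @^-1` A)).
have Pp : P (X 0%N @^-1` A) = p%:E by rewrite fineK ?fin_num_measure.
have p0 : 0 <= p by rewrite fine_ge0.
have p1 : p <= 1 by rewrite -lee_fin -Pp probability_le1.
rewrite Pp lte_fin => XA pc.
have [s s0 rate_lt1] := chernoff_rate_lt1 p0 pc.
apply: filterS (ae_eventually_notin_of_summable (measurable_excess_event X mA c) _).
  move=> w; apply: filterS => n; apply: contra_notP => /negP.
  by rewrite -ltNge; exact: excess_eventW.
apply: le_lt_trans (@geometric_eseries_lt_pinfty _ (expR (p * (expR s - 1) - s * c)) _).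
  apply: lee_nneseries => [n _ _|n _]; first exact: measure_ge0.
  by apply: excess_event_prob_le => //; rewrite p0 p1.
by rewrite expR_ge0 rate_lt1.
Qed.

Lemma measurable_mixture_density (R : realType) m (f : R -> R) (alpha mu : 'I_m -> R)
    (sigma : R) :
  continuous f -> measurable_fun setT (mixture_density f alpha mu sigma).
Proof.
move=> f_cont; apply: measurable_sum => j.
apply: measurable_realfun.continuous_measurable_fun => x.
apply: cvgMr; apply: cvgMr; apply: continuous_comp; last exact: f_cont.
by apply: cvgMl; apply: cvgB; [exact: cvg_id | exact: cvg_cst].
Qed.

Lemma mixture_density_bounded (R : realType) m (f : R -> R) (alpha mu : 'I_m -> R)
    (sigma v0 : R) :
  (forall z, 0 <= f z <= v0) -> in_Psi_m alpha -> 0 < sigma ->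
  forall x, 0 <= mixture_density f alpha mu sigma x <= v0 / sigma.
Proof.
move=> f_bnd [alpha_ge0 alpha_sum1] sigma_gt0 x.
have f_ls j : 0 <= locscale f (mu j) sigma x <= sigma^-1 * v0.
  have /andP[f0 f1] := f_bnd ((x - mu j) / sigma).
  have sigmaV_ge0 : 0 <= sigma^-1 by rewrite invr_ge0 ltW.
  by rewrite /locscale mulr_ge0 ?ler_wpM2l.
apply/andP; split.
  by apply: sumr_ge0 => j _; rewrite mulr_ge0 //; case/andP: (f_ls j).
apply: le_trans (_ : \sum_(j < m) alpha j * (sigma^-1 * v0) <= _).
  by apply: ler_sum => j _; rewrite ler_wpM2l //; case/andP: (f_ls j).
by rewrite -mulr_suml alpha_sum1 mul1r mulrC.
Qed.

Lemma has_density_itv_le d (T : measurableType d) (R : realType)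
    (P : probability T R) (Y : T -> R) (g : R -> R) (B x h : R) :
  has_density P Y g -> measurable_fun setT g -> (forall z, 0 <= g z <= B) ->
  0 <= h -> (P (Y @^-1` `](x - h)%R, (x + h)%R[) <= (2 * h * B)%:E)%E.
Proof.
move=> dens mg g_bnd h0; rewrite dens //.
have B0 : 0 <= B by case/andP: (g_bnd 0) => g0 g1; exact: le_trans g1.
apply: le_trans (_ : \int[lebesgue_measure]_(z in `](x - h)%R, (x + h)%R[) (cst B%:E) z <= _)%E.
  apply: ge0_le_integral => //.
  - by move=> z _; rewrite lee_fin; case/andP: (g_bnd z).
  - by apply/measurable_realfun.measurable_EFinP; exact: measurable_funS mg.
  - by move=> z _; rewrite lee_fin; case/andP: (g_bnd z).
rewrite integral_cst //= lebesgue_measure_itv /= lte_fin.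
case: ifP => _; last by rewrite mule0 lee_fin; nra.
by rewrite -EFinD -EFinM lee_fin; nra.
Qed.

Lemma measurable_abs_gt (R : realType) (M : R) : measurable [set x : R | M < `|x|].
Proof.
have := @measurable_realfun.normr_measurable R setT measurableT _ (measurable_itv `]M, +oo[).
rewrite setTI; congr measurable; apply/seteqP; split => x /=; rewrite in_itv /= andbT //.
Qed.

Lemma exists_tail_prob_lt d (T : measurableType d) (R : realType)
    (P : probability T R) (Y : {mfun T >-> R}) (c : R) :
  0 < c -> exists M : R, (P (Y @^-1` [set x | (M < `|x|)%R]) < c%:E)%E.
Proof.
move=> c0; pose F k := Y @^-1` [set x | k%:R < `|x|].
have mF k : measurable (F k) by apply: measurable_funPTI; exact: measurable_abs_gt.
have F_decr : nonincreasing_seq F.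
  move=> i j ij; apply/subsetPset => w; rewrite /F /=; apply: le_lt_trans.
  by rewrite ler_nat.
have F_cap : \bigcap_k F k = set0.
  apply/seteqP; split => // w /= Fw.
  have /andP[_ lt_trunc] := truncn_itv (normr_ge0 (Y w)).
  by have := Fw (Num.Def.trunc `|Y w|).+1 I; rewrite /F /=; lra.
have : (P \o F) k @[k --> \oo] --> 0%E.
  rewrite -(measure0 P) -F_cap; apply: nonincreasing_cvg_mu => //.
    by rewrite (le_lt_trans (probability_le1 _ (mF 0%N))) ?ltry.
  exact: bigcap_measurable.
case/fine_cvgP => _ /(cvgr_lt 0)/(_ c c0)[N _ FN].
exists N%:R; rewrite -[X in (X < _)%E]fineK ?lte_fin ?fin_num_measure //; last exact: mF.
exact: (FN N (leqnn N)).
Qed.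

Lemma window_sub_abs_gt (R : realType) (M r mu : R) :
  M + r < `|mu| -> [set x | `|x - mu| < r] `<=` [set x | M < `|x|].
Proof.
move=> far x /= near_mu.
have := ler_normD x (mu - x); rewrite addrC subrK distrC; lra.
Qed.

(* The centres [- L + k * del], [k <= 2 L / del], form a [del]-net of [[-L, L]]. *)
Lemma window_sub_grid_cell (R : realType) (L r del mu : R) : 0 < del -> `|mu| <= L ->
  exists2 k : nat, (k < (Num.Def.trunc (2 * L / del)).+1)%N &
    [set x | `|x - mu| < r] `<=`
    `](- L + k%:R * del - (r + del)), (- L + k%:R * del + (r + del))[%classic.
Proof.
move=> del0; rewrite ler_norml => /andP[muL muL'].
have q0 : 0 <= (mu + L) / del by apply: divr_ge0; lra.
have /andP[k_le k_gt] := truncn_itv q0; set k := Num.Def.trunc _ in k_le k_gt.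
have muLE : (mu + L) / del * del = mu + L by rewrite divfK ?gt_eqF.
have kd_le : k%:R * del <= mu + L by rewrite -muLE ler_wpM2r // ltW.
have kd_gt : mu + L < k%:R * del + del.
  have : (mu + L) / del * del < k.+1%:R * del by rewrite ltr_pM2r.
  by rewrite muLE -natr1 mulrDl mul1r.
exists k.
  have q_le : (mu + L) / del <= 2 * L / del by rewrite ler_pM2r ?invr_gt0 //; lra.
  have /andP[_ trunc_gt] := truncn_itv (le_trans q0 q_le).
  by rewrite -(ltr_nat R); apply: le_lt_trans trunc_gt; exact: le_trans q_le.
move=> x /=; rewrite ltr_distlC in_itv /= => /andP[xl xr]; apply/andP; split; lra.
Qed.

Lemma sum_window_le (R : realType) n (x : nat -> R) (mu r : R) (A : set R) :
  [set y | `|y - mu| < r] `<=` A ->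
  (\sum_(i < n) (if `|x i - mu| < r then 1 else 0) : R) <= \sum_(i < n) (x i \in A)%:R.
Proof.
move=> subA; apply: ler_sum => i _.
case near_mu : (`|x i - mu| < r); last exact: ler0n.
by rewrite mem_set //; exact: subA.
Qed.

Lemma exists_slack (R : realType) (r B c : R) : 0 <= B -> 2 * r * B < c ->
  exists2 del, 0 < del & 2 * (r + del) * B < c.
Proof.
move=> B0 rBc; pose del := (c - 2 * r * B) / (4 * B + 1).
have delE : del * (4 * B + 1) = c - 2 * r * B by rewrite divfK // gt_eqF //; lra.
have del0 : 0 < del by apply: divr_gt0; lra.
by exists del => //; nra.
Qed.

Lemma ae_window_count_le d (T : measurableType d) (R : realType) (P : probability T R)
    (X : nat -> {mfun T >-> R}) (g : R -> R) (B r c : R) :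
  mutually_independent P (fun i => X i : T -> R) ->
  (forall i, has_density P (X i) g) -> measurable_fun setT g ->
  (forall x, 0 <= g x <= B) -> 0 <= r -> 2 * r * B < c ->
  {ae P, forall w, exists n0 : nat, forall n, (n0 <= n)%N -> forall mu : R,
    (\sum_(i < n) (if `|X i w - mu| < r then 1 else 0) : R) <= c * n%:R}.
Proof.
move=> indep dens mg g_bnd r0 rBc.
have B0 : 0 <= B by case/andP: (g_bnd 0) => g0 g1; exact: le_trans g1.
have c0 : 0 < c by apply: le_lt_trans rBc; rewrite !mulr_ge0.
have [del del0 cell_small] := exists_slack B0 rBc.
have [M tail_small] := exists_tail_prob_lt P (X 0%N) c0.
set L := M + r; set K := (Num.Def.trunc (2 * L / del)).+1.
pose cell (o : option 'I_K) : set R := if o is Some k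
  then `](- L + k%:R * del - (r + del)), (- L + k%:R * del + (r + del))[%classic
  else [set x | M < `|x|].
have mcell o : measurable (cell o).
  by case: o => [k|]; [exact: measurable_itv | exact: measurable_abs_gt].
have cell_prob o : (P (X 0%N @^-1` cell o) < c%:E)%E.
  case: o => [k|//]; apply: le_lt_trans (has_density_itv_le _ (dens 0%N) mg g_bnd _) _.
    by rewrite addr_ge0 // ltW.
  by rewrite lte_fin.
have cell_freq o := ae_eventually_freq_le (mcell o) indep
  (fun i => etrans (dens i _ (mcell o)) (esym (dens 0%N _ (mcell o)))) (cell_prob o).
have := filter_forall (ae_filter_ringOfSetsType P) cell_freq.
apply: filterS => w /(filter_forall _)[N _ freqN].
exists N => n Nn mu; have [far|near] := ltP L `|mu|.
  exact: le_trans (sum_window_le n (X^~ w) (window_sub_abs_gt far)) (freqN n Nn None).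
have [k kK sub] := window_sub_grid_cell r del0 near.
exact: le_trans (sum_window_le n (X^~ w) sub) (freqN n Nn (Some (Ordinal kK))).
Qed.

Theorem lemma1 (R : realType) (d : measure_display) (T : measurableType d)
  (P : probability T R) (m : nat) (f : R -> R) (v0 v1 beta : R)
  (alpha0 mu0 : 'I_m -> R) (sigma0 : R) (X : nat -> {RV P >-> R}) :
  (0 < m)%N ->
  is_density f -> condC3 f v0 v1 beta -> condC4 f ->
  in_Psi_m alpha0 -> 0 < sigma0 ->
  mutually_independent P (fun i => X i : T -> R) ->
  (forall i, has_density P (X i) (mixture_density f alpha0 mu0 sigma0)) ->
  let a := (1 + beta) / (2 * beta) in
  let b := 2 * (beta + 1) / (beta - 1) in
  let eps0 := (3 * m%:R * b * v0 / sigma0) `^ (- (1 / (1 - a))) in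
  {ae P, forall w, exists n0 : nat, forall n : nat, (n0 <= n)%N ->
    forall mu : R,
      (\sum_(i < n) (if `|X i w - mu| < eps0 `^ (1 - a) then 1 else 0) : R) <= n%:R / (m%:R * b)}.
Proof.
move=> m_gt0 [_ [f_ge0 _]] [v0_gt0 [_ [beta_gt1 f_C3]]] f_cont Psi0 sigma0_gt0 indep dens.
move=> a b eps0.
have f_bnd z : 0 <= f z <= v0 by rewrite f_ge0 (f_C3 z).1.
have b_gt0 : 0 < b by apply: divr_gt0; lra.
have K_gt0 : 0 < 3 * m%:R * b * v0 / sigma0.
  by apply: divr_gt0 => //; rewrite mulr_gt0 // mulr_gt0 // mulr_gt0 // ltr0n.
have one_sub_a_neq0 : 1 - a != 0.
  rewrite /a gt_eqF // subr_gt0 ltr_pdivrMr ?mulr_gt0 //; lra.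
have r_eq : eps0 `^ (1 - a) = (3 * m%:R * b * v0 / sigma0)^-1.
  by rewrite /eps0 -powRrM mulNr div1r mulVf // powR_inv1 // ltW.
apply: filterS (ae_window_count_le (c := (m%:R * b)^-1) indep dens
  (measurable_mixture_density _ _ _ f_cont)
  (mixture_density_bounded mu0 f_bnd Psi0 sigma0_gt0) (powR_ge0 _ _) _).
  by move=> w [n0 count_le]; exists n0 => n /count_le; rewrite mulrC.
have mb_gt0 : 0 < m%:R * b by rewrite mulr_gt0 // ltr0n.
have -> : 2 * eps0 `^ (1 - a) * (v0 / sigma0) = 2 / 3 * (m%:R * b)^-1.
  by rewrite r_eq; field; rewrite !gt_eqF // ltr0n.
by rewrite gtr_pMl ?invr_gt0 //; lra.
Qed.
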